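(* Let $K$ be a compact subset of $\mathbb R^d$, let $A\subset K$ be a Borel set, let $\mu\in\mathcal P(K)$ and $r>0$. Then $$\int_A\log\mu(B(x,2r))\,d\mu(x)\ge-\mu(A(r))\log\mathbf N_r(A)-e^{-1}.$$
   Context: $\mathcal P(K)$ is the set of Borel probability measures on $K$, $B(x,r)$ the open ball, $A(r)=\{x\in K:\operatorname{dist}(x,A)<r\}$, and $\mathbf N_r(A)$ the smallest number of balls of radius $r$ needed to cover $A$. *)

From HB Require Import structures.
From mathcomp Require Import all_boot all_order all_algebra.
From mathcomp Require Import all_classical all_reals all_analysis.
Set Implicit Arguments. Unset Strict Implicit. Unset Printing Implicit Defensive.
Import Order.TTheory GRing.Theory Num.Theory.
Import numFieldNormedType.Exports.
Local Open Scope classical_set_scope.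
Local Open Scope ring_scope.

Definition Rd (R : realType) (d : nat) := g_sigma_algebraType (@open ('rV[R]_d)).

Definition edist {R : realType} {d : nat} (x y : 'rV[R]_d) : R :=
  Num.sqrt (\sum_(i < d) (x ord0 i - y ord0 i) ^+ 2).

Definition eball {R : realType} {d : nat} (x : 'rV[R]_d) (r : R) : set (Rd R d) :=
  [set y | edist x y < r].

(* A(r) = {x in K : dist(x,A) < r}; dist(x,A) < r iff some a in A has |x-a| < r
   (and dist(x, empty) = +oo). *)
Definition nbhdK {R : realType} {d : nat} (K A : set 'rV[R]_d) (r : R) : set (Rd R d) :=
  [set x | K x /\ exists2 a, A a & edist x a < r].

(* A can be covered by n open balls of radius r (of the metric space K,
   i.e. centered at points of K). *)
Definition covers_by {R : realType} {d : nat} (K A : set 'rV[R]_d) (r : R) (n : nat) :=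
  exists c : 'I_n -> 'rV[R]_d,
    (forall i, K (c i)) /\ A `<=` \bigcup_(i in setT) (eball (c i) r : set 'rV[R]_d).

(* N_r(A): the smallest number of such balls needed to cover A
   (defaults to 0 if no finite cover exists, which never happens for A in a compact K). *)
Definition Ncov {R : realType} {d : nat} (K A : set 'rV[R]_d) (r : R) : nat :=
  match pselect (exists n, `[< covers_by K A r n >]) with
  | left h => ex_minn h
  | right _ => 0%N
  end.

From Pilot Require Import Defs.
From HB Require Import structures.
From mathcomp Require Import all_boot all_order all_algebra.
From mathcomp Require Import all_classical all_reals all_analysis.
From mathcomp Require Import ring lra measurable_realfun.
Import Order.TTheory GRing.Theory Num.Theory.
Import numFieldNormedType.Exports.
(* MathComp-Analysis also defines [edist]; make [Defs.edist] the visible one. *)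
Import Defs.
Local Open Scope classical_set_scope.
Local Open Scope ring_scope.

(* Cover [A] by [N = N_r(A)] balls of radius [r] and disjointify the traces of
   these balls on [A] into pieces [A_1, ..., A_N] of diameter less than [2r].
   For [x] in [A_k] the ball [B(x,2r)] contains [A_k], so the integrand is at
   least [log mu(A_k)] on [A_k] and the integral is at least
   [sum_k p_k log p_k] with [p_k = mu(A_k)].  Summing the tangent lines of the
   convex map [t log t] at the mean [m/N], where [m = sum_k p_k = mu(A)],
   bounds this below by [m log m - m log N >= -1/e - mu(A(r)) log N]. *)

Section Euclidean.
Context {R : realType}.

Section CauchySchwarz.
Variables (I : finType) (a b : I -> R).

Lemma sum_sqr_ge0 (c : I -> R) : 0 <= \sum_i c i ^+ 2.
Proof. by rewrite sumr_ge0 // => i _; rewrite sqr_ge0. Qed.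

(* Lagrange's identity, doubled and summed over ordered pairs. *)
Lemma lagrange_sum_sqr :
  \sum_i \sum_j (a i * b j - a j * b i) ^+ 2 =
  2 * ((\sum_i a i ^+ 2) * (\sum_j b j ^+ 2) - (\sum_i a i * b i) ^+ 2).
Proof.
have -> : \sum_i \sum_j (a i * b j - a j * b i) ^+ 2 =
    \sum_i \sum_j (a i ^+ 2 * b j ^+ 2) + \sum_i \sum_j (a j ^+ 2 * b i ^+ 2)
    - 2 * \sum_i \sum_j (a i * b i) * (a j * b j).
  rewrite mulr_sumr -!big_split -sumrB; apply: eq_bigr => i _.
  rewrite mulr_sumr -!big_split -sumrB; apply: eq_bigr => j _ /=; ring.
rewrite [X in _ + X - _]exchange_big expr2 !big_distrlr /=; ring.
Qed.

Lemma cauchy_schwarz :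
  \sum_i a i * b i <= Num.sqrt (\sum_i a i ^+ 2) * Num.sqrt (\sum_i b i ^+ 2).
Proof.
have S2 : (\sum_i a i * b i) ^+ 2 <= (\sum_i a i ^+ 2) * (\sum_i b i ^+ 2).
  rewrite -subr_ge0 -(pmulr_rge0 _ (ltr0n _ 2)) -lagrange_sum_sqr.
  by rewrite sumr_ge0 // => i _; apply: sum_sqr_ge0.
rewrite -sqrtrM ?sum_sqr_ge0 // (le_trans (ler_norm _)) // -sqrtr_sqr.
exact: ler_wsqrtr.
Qed.

Lemma minkowski :
  Num.sqrt (\sum_i (a i + b i) ^+ 2) <=
  Num.sqrt (\sum_i a i ^+ 2) + Num.sqrt (\sum_i b i ^+ 2).
Proof.
rewrite -[X in _ <= X]ger0_norm ?addr_ge0 ?sqrtr_ge0 // -sqrtr_sqr ler_wsqrtr //.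
rewrite sqrrD !sqr_sqrtr ?sum_sqr_ge0 //.
under eq_bigr do rewrite sqrrD.
rewrite !big_split /= lerD2r lerD2l mulr2n.
by rewrite lerD ?cauchy_schwarz.
Qed.

End CauchySchwarz.

Lemma sum_sqr_le_sqr_sum_norm (I : Type) (r : seq I) (c : I -> R) :
  \sum_(i <- r) c i ^+ 2 <= (\sum_(i <- r) `|c i|) ^+ 2.
Proof.
elim: r => [|h t IH]; first by rewrite !big_nil expr0n.
have t0 : 0 <= \sum_(i <- t) `|c i| by rewrite sumr_ge0.
rewrite !big_cons -real_normK ?num_real //.
have := normr_ge0 (c h); nra.
Qed.

Context {d : nat}.
Implicit Types x y z : 'rV[R]_d.

Lemma edistC x y : edist x y = edist y x.
Proof. by rewrite /edist; congr Num.sqrt; apply: eq_bigr => i _; ring. Qed.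

Lemma edistxx x : edist x x = 0.
Proof. by rewrite /edist big1 ?sqrtr0 // => i _; rewrite subrr expr0n. Qed.

Lemma edist_triangle x y z : edist x z <= edist x y + edist y z.
Proof.
rewrite /edist (_ : \sum__ _ = \sum_(i < d)
    ((x ord0 i - y ord0 i) + (y ord0 i - z ord0 i)) ^+ 2) ?minkowski //.
by apply: eq_bigr => i _; congr (_ ^+ 2); ring.
Qed.

Lemma edist_le_sum_norm x y : edist x y <= \sum_(i < d) `|x ord0 i - y ord0 i|.
Proof.
rewrite -[X in _ <= X]ger0_norm ?sumr_ge0 // -sqrtr_sqr.
exact/ler_wsqrtr/sum_sqr_le_sqr_sum_norm.
Qed.

(* [ball] on ['rV[R]_d] is the ball of the max norm. *)
Lemma edist_lt_ball x y e : 0 < e -> ball x (e / (d%:R + 1)) y -> edist x y < e.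
Proof.
move=> e0 [_ xy]; have d1 : 0 < d%:R + 1 :> R by rewrite ltr_pwDr.
apply: (le_lt_trans (edist_le_sum_norm x y)).
apply: (le_lt_trans (y := \sum_(i < d) (e / (d%:R + 1)))).
  by apply: ler_sum => i _; apply/ltW/(xy ord0 i).
rewrite sumr_const card_ord -(mulr_natr (e / _)) mulrAC ltr_pdivrMr //.
by rewrite mulrDr mulr1 ltrDl.
Qed.

Lemma eball_open x e : open (eball x e : set 'rV[R]_d).
Proof.
rewrite openE => y xy; apply/nbhs_ballP.
have e0 : 0 < e - edist x y by rewrite subr_gt0.
exists ((e - edist x y) / (d%:R + 1)); first by rewrite /= divr_gt0 // ltr_pwDr.
move=> z /(edist_lt_ball _ _ _ e0) yz; rewrite /eball /=.
have := edist_triangle x y z; lra.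
Qed.

End Euclidean.

Section XlnX.
Context {R : realType}.

Lemma xlnx_ge_NexpRN1 (x : R) : 0 <= x -> - expR (-1) <= x * ln x.
Proof.
rewrite le_eqVlt => /orP[/eqP<-|x0]; first by rewrite mul0r lerNl oppr0 expR_ge0.
have := expR_ge1Dx (-1 - ln x); rewrite expRD expRN lnK ?posrE // => le_lnx.
have : - ln x <= expR (-1) / x by lra.
rewrite ler_pdivlMr //; nra.
Qed.

(* The right-hand side is the tangent line of the convex map [x * ln x] at [q]. *)
Lemma xlnx_ge_tangent (p q : R) : 0 <= p -> 0 < q -> p * ln q + p - q <= p * ln p.
Proof.
rewrite le_eqVlt => /orP[/eqP<- q0|p0 q0].
  by rewrite !mul0r add0r sub0r lerNl oppr0 ltW.
have := expR_ge1Dx (ln q - ln p); rewrite expRD expRN !lnK ?posrE // => le_qp.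
have : p * (1 + (ln q - ln p)) <= p * (q * p^-1) by rewrite ler_pM2l.
rewrite mulrCA mulfV ?gt_eqF // mulr1; lra.
Qed.

Lemma sum_xlnx_ge (N : nat) (p : 'I_N -> R) : (forall i, 0 <= p i) ->
  - (\sum_i p i) * ln N%:R - expR (-1) <= \sum_i p i * ln (p i).
Proof.
case: N p => [|n] p p0.
  by rewrite !big_ord0 oppr0 mul0r sub0r lerNl oppr0 expR_ge0.
set N := n.+1; set m := \sum_i p i.
have [m_eq0|m_neq0] := eqVneq m 0.
  have pi0 i : p i = 0.
    apply/eqP; rewrite eq_le p0 andbT -m_eq0 /m (bigD1 i) //= lerDl.
    exact: sumr_ge0.
  rewrite m_eq0 big1 => [|i _]; last by rewrite pi0 mul0r.
  by rewrite oppr0 mul0r sub0r lerNl oppr0 expR_ge0.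
have m_gt0 : 0 < m by rewrite lt_def m_neq0 sumr_ge0.
have N_gt0 : 0 < N%:R :> R by rewrite ltr0n.
(* Sum the tangent inequalities at the mean [m / N]. *)
have : \sum_i (p i * ln (m / N%:R) + p i - m / N%:R) <= \sum_i p i * ln (p i).
  by apply: ler_sum => i _; apply: xlnx_ge_tangent; rewrite ?divr_gt0.
rewrite sumrB big_split /= -mulr_suml sumr_const card_ord -/m.
rewrite -(mulr_natr (m / _)) mulfVK ?gt_eqF // ln_div ?posrE //.
have := xlnx_ge_NexpRN1 _ (ltW m_gt0); lra.
Qed.

End XlnX.

Section PartitionIntegral.
Local Open Scope ereal_scope.
Context {d} {T : measurableType d} {R : realType}.

(* Both sides are suprema over simple functions, so no measurability is needed. *)
Lemma ge0_le_integral_nonmeasurable (mu : {measure set T -> \bar R}) {D : set T}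
    {f g : T -> \bar R} :
  (forall x, D x -> 0 <= f x) -> (forall x, D x -> f x <= g x) ->
  \int[mu]_(x in D) f x <= \int[mu]_(x in D) g x.
Proof.
move=> f0 fg; have g0 x : D x -> 0 <= g x.
  by move=> Dx; exact: le_trans (f0 x Dx) (fg x Dx).
rewrite !ge0_integralE //; apply: ereal_sup_le => _ [h hf <-]; exists h => //= x.
exact: le_trans (hf x) (lee_restrict fg x).
Qed.

Context (mu : probability T R) {D : set T} {P : nat -> set T} {N : nat}.
Context {g : T -> \bar R}.
Hypotheses (mP : forall k, measurable (P k)) (tP : trivIset setT P).
Hypothesis DP : D = \big[setU/set0]_(k < N) P k.
Hypothesis g_le0 : forall x, D x -> g x <= 0.
Hypothesis lne_le_g : forall k x, (k < N)%N -> P k x -> lne (mu (P k)) <= g x.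

Let mD : measurable D. Proof. by rewrite DP; exact: bigsetU_measurable. Qed.

Let PD k : (k < N)%N -> P k `<=` D.
Proof. by move=> kN x Pkx; rewrite DP -bigcup_mkord; exists k. Qed.

Lemma sum_xlnx_le_integral :
  (\sum_(k < N) fine (mu (P k)) * ln (fine (mu (P k))))%:E <= \int[mu]_(x in D) g x.
Proof.
pose c k := - lne (mu (P k)).
have c_ge0 k : 0 <= c k by rewrite /c oppe_ge0 lne_le0; exact: probability_le1.
pose h x := \sum_(k < N) (cst (c k)) \_ (P k) x.
have h_ge0 k x : 0 <= (cst (c k)) \_ (P k) x.
  exact: (erestrict_ge0 (fun y _ => c_ge0 k)).
have gneg_le_h x : D x -> g^\- x <= h x.
  move=> Dx; have := Dx; rewrite DP -bigcup_mkord => -[k /= kN Pkx].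
  rewrite funenegE (_ : maxe _ _ = - g x); last first.
    by apply/max_idPl; rewrite oppe_ge0 g_le0.
  rewrite /h (bigD1 (Ordinal kN)) //= patchE mem_set //= -[X in X <= _]adde0.
  by rewrite leeD ?sume_ge0 // leeNl /c oppeK lne_le_g.
have int_h : \int[mu]_(x in D) h x = \sum_(k < N) c k * mu (P k).
  rewrite ge0_integral_sum //; last first.
    by move=> k; exact: (measurable_restrict _ (mP k) mD).1 (measurable_cst _).
  apply: eq_bigr => k _; rewrite -integral_mkcondr setIidr ?integral_cst //.
  exact: PD.
have c_mu k : c k * mu (P k) = (- (fine (mu (P k)) * ln (fine (mu (P k)))))%:E.
  have : mu (P k) \is a fin_num by exact: fin_num_measure.
  rewrite /c; have : 0 <= mu (P k) by [].
  case: (mu (P k)) => // p; rewrite lee_fin le_eqVlt => /predU1P[<- _|p_gt0 _].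
    by rewrite le0_lneNy // mul0r oppr0 mule0.
  by rewrite lne_EFin // -EFinN -EFinM mulNr mulrC.
rewrite integralE integral0_eq => [|x Dx]; last first.
  by rewrite funeposE; apply/max_idPr; exact: g_le0.
have gneg_ge0 x : D x -> 0 <= g^\- x by move=> _; exact: funeneg_ge0.
rewrite sub0e leeNr.
apply: (le_trans (ge0_le_integral_nonmeasurable mu gneg_ge0 gneg_le_h)).
by rewrite int_h (eq_bigr _ (fun (k : 'I_N) _ => c_mu k)) sumEFin -EFinN lee_fin sumrN.
Qed.

Lemma le_integral_partition :
  (- fine (mu D) * ln N%:R - expR (-1))%:E <= \int[mu]_(x in D) g x.
Proof.
apply: le_trans sum_xlnx_le_integral; rewrite lee_fin.
have -> : fine (mu D) = (\sum_(k < N) fine (mu (P k)))%R.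
  by rewrite DP measure_bigsetU // sum_fine // => k _; exact: fin_num_measure.
by apply: sum_xlnx_ge => k; rewrite fine_ge0.
Qed.

End PartitionIntegral.

Section Covering.
Context {R : realType} {d : nat}.
Implicit Types (K A : set 'rV[R]_d) (r : R).

Lemma open_measurable_Rd (U : set 'rV[R]_d) :
  open U -> measurable (U : set (Rd R d)).
Proof. exact: sub_sigma_algebra. Qed.

Lemma eball_measurable (x : 'rV[R]_d) r : measurable (eball x r).
Proof. by apply: open_measurable_Rd; exact: eball_open. Qed.

Lemma covers_by_compact {K A r} : compact K -> A `<=` K -> 0 < r ->
  exists n, covers_by K A r n.
Proof.
rewrite compact_cover => cK AK r0.
have [x Kx|D' KD' cover] :=
  cK _ K (fun x => eball x r : set 'rV[R]_d) (fun x _ => eball_open x r).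
  by exists x => //; rewrite /eball /= edistxx.
pose s := finmap.enum_fset D'.
exists (size s), (fun i => nth 0 s i); split.
  move=> i; have := KD' (nth 0 s i); rewrite in_setE; apply; exact: mem_nth.
move=> x /AK /cover [y /= yD' xy].
have ys : (index y s < size s)%N by rewrite index_mem.
by exists (Ordinal ys) => //=; rewrite nth_index.
Qed.

Lemma covers_by_Ncov {K A r} :
  (exists n, covers_by K A r n) -> covers_by K A r (Ncov K A r).
Proof.
move=> [n Hn]; rewrite /Ncov; case: pselect => [h|[]]; last by exists n; apply/asboolP.
by case: ex_minnP => m /asboolP.
Qed.

Lemma cover_partition {K A r N} :
  covers_by K A r N -> measurable (A : set (Rd R d)) ->
  exists P : nat -> set (Rd R d),
    [/\ forall k, measurable (P k), trivIset setT P,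
        A = \big[setU/set0]_(k < N) P k &
        forall k x, P k x -> P k `<=` eball x (2 * r)].
Proof.
move=> [c [_ cover]] mA.
pose c' k : 'rV[R]_d := if insub k is Some i then c i else 0.
pose F k : set (Rd R d) := A `&` eball (c' k) r.
exists (seqDU F); split.
- by apply: seqDU_measurable => k; apply: measurableI => //; exact: eball_measurable.
- exact: trivIset_seqDU.
- rewrite -bigsetU_seqDU -bigcup_mkord; apply/seteqP; split => [x Ax|x [k _ []//]].
  have [i _ xi] := cover x Ax; exists i; first exact: ltn_ord.
  by split => //; rewrite /c' valK.
- move=> k x [[_ xk] _] y [[_ yk] _]; rewrite /eball /= in xk yk *.
  have := edist_triangle x (c' k) y; rewrite (edistC x (c' k)); lra.
Qed.

Lemma measurable_nbhdK K A r : compact K -> measurable (nbhdK K A r).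
Proof.
move=> cK; have -> : nbhdK K A r =
    (K : set (Rd R d)) `&` \bigcup_(a in A) (eball a r : set 'rV[R]_d).
  apply/seteqP; split => x [Kx [a Aa xa]]; split => //; exists a => //;
    by rewrite /eball /= edistC.
apply: measurableI; last first.
  by apply: open_measurable_Rd; apply: bigcup_open => a _; exact: eball_open.
rewrite -[K]setCK; apply: measurableC; apply: open_measurable_Rd; apply: closed_openC.
by apply: compact_closed => //; exact: norm_hausdorff.
Qed.

End Covering.

Theorem lemma6p1 (R : realType) (d : nat) (K A : set 'rV[R]_d)
    (mu : probability (Rd R d) R) (r : R) :
  compact K ->
  A `<=` K ->
  measurable (A : set (Rd R d)) ->
  mu (K : set (Rd R d)) = 1%E ->
  0 < r ->
  (\int[mu]_(x in (A : set (Rd R d))) lne (mu (eball x (2 * r))) >=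
    (- (fine (mu (nbhdK K A r)) * ln (Ncov K A r)%:R) - expR (-1))%:E)%E.
Proof.
move=> cK AK mA _ r0.
have cover := covers_by_Ncov (covers_by_compact cK AK r0).
have [P [mP tP AP Pball]] := cover_partition cover mA.
have mball (x : 'rV[R]_d) : measurable (eball x (2 * r)) by exact: eball_measurable.
have lne_ball_le0 x : A x -> (lne (mu (eball x (2 * r))) <= 0)%E.
  by move=> _; rewrite lne_le0 probability_le1.
have lne_piece_le k x : (k < Ncov K A r)%N -> P k x ->
    (lne (mu (P k)) <= lne (mu (eball x (2 * r))))%E.
  move=> _ Pkx; rewrite lee_lne ?in_itv /= ?measure_ge0 ?leey //.
  by apply: le_measure; rewrite ?inE //; exact: Pball.
apply: le_trans (le_integral_partition mu mP tP AP lne_ball_le0 lne_piece_le).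
have mN : measurable (nbhdK K A r) by exact: measurable_nbhdK.
have A_nbhd : fine (mu A) <= fine (mu (nbhdK K A r)).
  apply: fine_le; rewrite ?fin_num_measure //.
  apply: le_measure; rewrite ?inE //.
  by move=> x Ax; split; [exact: AK | exists x => //; rewrite edistxx].
have lnN_ge0 : 0 <= ln (Ncov K A r)%:R :> R.
  by case: (Ncov K A r) => [|n]; [rewrite ln0 | apply: ln_ge0; rewrite ler1n].
by rewrite lee_fin lerD2r mulNr lerN2 ler_wpM2r.
Qed.
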